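(* Let $F$ be a first-order formula, let $\vec{h}$ be a tuple of distinct predicate symbols occurring in $F$, let $\vec{p}=\mathit{pred}(F)$, and let $\mathcal{S}=\mathit{pred}(F)\setminus\vec{h}$. Then a Herbrand interpretation $\mathcal{I}$ (over $\mathcal{S}$) is a model of $\exists \vec{H}\,\mathrm{SM}_{\vec{p}}[F^{\vec{h}}_{\vec{H}}]$ if and only if there is an answer set $\mathcal{J}$ of $F$ such that $\mathcal{I}=\mathcal{J}|_{\mathcal{S}}$.
   Context: For predicate symbols or predicate variables $p,q$ of the same arity $m$, $p\le q$ abbreviates $\forall\vec{x}(p(\vec{x})\to q(\vec{x}))$ with $\vec{x}$ an $m$-tuple of variables; for tuples $\vec{p}=p_1,\dots,p_n$, $\vec{q}=q_1,\dots,q_n$, $\vec{p}\le\vec{q}$ is $\bigwedge_i (p_i\le q_i)$ and $\vec{p}<\vec{q}$ is $(\vec{p}\le\vec{q})\wedge\neg(\vec{q}\le\vec{p})$. $\neg G$ abbreviates $G\to\bot$. For a first-order formula $F$ and a tuple $\vec{p}=p_1,\dots,p_n$ of distinct predicate symbols (not equality), $\mathrm{SM}_{\vec{p}}[F]:=F\wedge\neg\exists\vec{U}((\vec{U}<\vec{p})\wedge F^* )$, where $\vec{U}=U_1,\dots,U_n$ are fresh predicate variables and $F^*$ is defined recursively: $F^*=F$ for atomic $F$ not containing members of $\vec{p}$; $p_i(\vec{t})^*=U_i(\vec{t})$; $(G\otimes H)^*=G^*\otimes H^*$ for $\otimes\in\{\wedge,\vee\}$; $(G\to H)^*=(G^*\to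 H^* )\wedge(G\to H)$; $(Qx\,G)^*=Qx\,G^*$ for $Q\in\{\forall,\exists\}$. $\mathit{pred}(F)$ is the set of free predicate symbols of $F$ other than equality. An answer set of $F$ is a Herbrand model of $\mathrm{SM}_{\mathit{pred}(F)}[F]$. Herbrand interpretations are identified with sets of ground atoms; $\mathcal{J}|_{\mathcal{S}}$ denotes the restriction of $\mathcal{J}$ to the predicate symbols in $\mathcal{S}$. $F^{\vec{h}}_{\vec{H}}$ is the result of replacing each predicate symbol of $\vec{h}$ in $F$ by the corresponding predicate variable of a tuple $\vec{H}$ of fresh predicate variables of matching arities. *)

From mathcomp Require Import all_boot.
Set Implicit Arguments. Unset Strict Implicit. Unset Printing Implicit Defensive.

(* Symbols carry their arity: (name, arity). *)
Definition predsym := (nat * nat)%type.   (* predicate constants (not equality) *)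
Definition funsym := (nat * nat)%type.   (* function constants (object constants: arity 0) *)
Definition pvar := (nat * nat)%type.

Inductive term : Type := TVar of nat | TFn of funsym & seq term.

Inductive pref : Type := PC of predsym | PV of pvar.

Definition pref_arity (P : pref) : nat :=
  match P with PC p => p.2 | PV v => v.2 end.

Inductive form : Type :=
| FBot
| FAtom of pref & seq term
| FEq of term & term
| FAnd of form & form
| FOr of form & form
| FImp of form & form
| FAll of nat & form
| FEx of nat & form
| FAll2 of pvar & form
| FEx2 of pvar & form.

Definition FNeg (A : form) : form := FImp A FBot.
Definition FTop : form := FNeg FBot.

Fixpoint term_vars (t : term) : seq nat :=
  match t with TVar x => [:: x] | TFn _ ts => flatten (map term_vars ts) end.

Fixpoint fv (A : form) : seq nat :=
  match A with
  | FBot => [::]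
  | FAtom _ ts => flatten (map term_vars ts)
  | FEq t1 t2 => term_vars t1 ++ term_vars t2
  | FAnd A B | FOr A B | FImp A B => fv A ++ fv B
  | FAll x A | FEx x A => filter (predC1 x) (fv A)
  | FAll2 _ A | FEx2 _ A => fv A
  end.

Fixpoint first_order (A : form) : bool :=
  match A with
  | FBot | FEq _ _ => true
  | FAtom (PC _) _ => true
  | FAtom (PV _) _ => false
  | FAnd A B | FOr A B | FImp A B => first_order A && first_order B
  | FAll _ A | FEx _ A => first_order A
  | FAll2 _ _ | FEx2 _ _ => false
  end.

Fixpoint term_ok (sig : seq funsym) (t : term) : bool :=
  match t with
  | TVar _ => true
  | TFn f ts => (f \in sig) && (size ts == f.2) && all (term_ok sig) ts
  end.

(* ground terms of the signature = elements of the Herbrand universe *)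
Fixpoint hterm (sig : seq funsym) (t : term) : bool :=
  match t with
  | TVar _ => false
  | TFn f ts => (f \in sig) && (size ts == f.2) && all (hterm sig) ts
  end.

Fixpoint wf (sig : seq funsym) (A : form) : bool :=
  match A with
  | FBot => true
  | FAtom P ts => (size ts == pref_arity P) && all (term_ok sig) ts
  | FEq t1 t2 => term_ok sig t1 && term_ok sig t2
  | FAnd A B | FOr A B | FImp A B => wf sig A && wf sig B
  | FAll _ A | FEx _ A | FAll2 _ A | FEx2 _ A => wf sig A
  end.

Fixpoint preds (A : form) : seq predsym :=
  match A with
  | FBot | FEq _ _ => [::]
  | FAtom (PC p) _ => [:: p]
  | FAtom (PV _) _ => [::]
  | FAnd A B | FOr A B | FImp A B => preds A ++ preds B
  | FAll _ A | FEx _ A | FAll2 _ A | FEx2 _ A => preds A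
  end.

Definition predF (A : form) : seq predsym := undup (preds A).

Definition le_form (P Q : pref) : form :=
  let m := pref_arity P in
  let xs := map TVar (iota 0 m) in
  foldr FAll (FImp (FAtom P xs) (FAtom Q xs)) (iota 0 m).

Definition le_tuple (Ps Qs : seq pref) : form :=
  foldr FAnd FTop (map (fun PQ => le_form PQ.1 PQ.2) (zip Ps Qs)).

Definition lt_tuple (Ps Qs : seq pref) : form :=
  FAnd (le_tuple Ps Qs) (FNeg (le_tuple Qs Ps)).

Definition ren (ps : seq predsym) (Vs : seq pvar) (P : pref) : pref :=
  match P with
  | PC q => if q \in ps then PV (nth (0, 0) Vs (index q ps)) else P
  | PV _ => P
  end.

Fixpoint map_atoms (g : pref -> pref) (A : form) : form :=
  match A with
  | FBot => FBot
  | FAtom P ts => FAtom (g P) ts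
  | FEq t1 t2 => FEq t1 t2
  | FAnd A B => FAnd (map_atoms g A) (map_atoms g B)
  | FOr A B => FOr (map_atoms g A) (map_atoms g B)
  | FImp A B => FImp (map_atoms g A) (map_atoms g B)
  | FAll x A => FAll x (map_atoms g A)
  | FEx x A => FEx x (map_atoms g A)
  | FAll2 v A => FAll2 v (map_atoms g A)
  | FEx2 v A => FEx2 v (map_atoms g A)
  end.

Fixpoint star (ps : seq predsym) (Us : seq pvar) (A : form) : form :=
  match A with
  | FBot => FBot
  | FAtom P ts => FAtom (ren ps Us P) ts
  | FEq t1 t2 => FEq t1 t2
  | FAnd A B => FAnd (star ps Us A) (star ps Us B)
  | FOr A B => FOr (star ps Us A) (star ps Us B)
  | FImp A B => FAnd (FImp (star ps Us A) (star ps Us B)) (FImp A B)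
  | FAll x A => FAll x (star ps Us A)
  | FEx x A => FEx x (star ps Us A)
  | FAll2 v A => FAll2 v (star ps Us A)
  | FEx2 v A => FEx2 v (star ps Us A)
  end.

Definition Ex2s (vs : seq pvar) (A : form) : form := foldr FEx2 A vs.

(* fresh predicate variables: even indices for the U's of SM,
   odd indices for the H's used for hiding (so they never clash) *)
Definition Uvars (ps : seq predsym) : seq pvar :=
  mkseq (fun i => (2 * i, (nth (0, 0) ps i).2)) (size ps).
Definition Hvars (hs : seq predsym) : seq pvar :=
  mkseq (fun j => (2 * j + 1, (nth (0, 0) hs j).2)) (size hs).

Definition SM (ps : seq predsym) (A : form) : form :=
  FAnd A (FNeg (Ex2s (Uvars ps)
     (FAnd (lt_tuple (map PV (Uvars ps)) (map PC ps)) (star ps (Uvars ps) A)))).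

Definition hidden_SM (A : form) (hs : seq predsym) : form :=
  Ex2s (Hvars hs) (map_atoms (ren hs (Hvars hs)) (SM (predF A) A)).

Definition interp := predsym -> seq term -> Prop.   (* a set of ground atoms *)
Definition pval := pvar -> seq term -> Prop.

Fixpoint eval (env : nat -> term) (t : term) : term :=
  match t with TVar x => env x | TFn f ts => TFn f (map (eval env) ts) end.

Definition upd_env (env : nat -> term) (x : nat) (t : term) : nat -> term :=
  fun y => if y == x then t else env y.
Definition upd_pv (nu : pval) (v : pvar) (R : seq term -> Prop) : pval :=
  fun w => if w == v then R else nu w.

Definition rel_ok (sig : seq funsym) (m : nat) (R : seq term -> Prop) : Prop :=
  forall ts, R ts -> size ts = m /\ all (hterm sig) ts.

Fixpoint sat (sig : seq funsym) (I : interp) (nu : pval) (env : nat -> term)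
    (A : form) : Prop :=
  match A with
  | FBot => False
  | FAtom (PC p) ts => I p (map (eval env) ts)
  | FAtom (PV v) ts => nu v (map (eval env) ts)
  | FEq t1 t2 => eval env t1 = eval env t2
  | FAnd A B => sat sig I nu env A /\ sat sig I nu env B
  | FOr A B => sat sig I nu env A \/ sat sig I nu env B
  | FImp A B => sat sig I nu env A -> sat sig I nu env B
  | FAll x A => forall t, hterm sig t -> sat sig I nu (upd_env env x t) A
  | FEx x A => exists t, hterm sig t /\ sat sig I nu (upd_env env x t) A
  | FAll2 v A => forall R, rel_ok sig v.2 R -> sat sig I (upd_pv nu v R) env A
  | FEx2 v A => exists R, rel_ok sig v.2 R /\ sat sig I (upd_pv nu v R) env A
  end.

Definition models (sig : seq funsym) (I : interp) (A : form) : Prop :=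
  forall nu env, sat sig I nu env A.

Definition herbrand_over (sig : seq funsym) (S : seq predsym) (I : interp) : Prop :=
  forall p ts, I p ts -> p \in S /\ size ts = p.2 /\ all (hterm sig) ts.

Definition answer_set (sig : seq funsym) (A : form) (J : interp) : Prop :=
  herbrand_over sig (predF A) J /\ models sig J (SM (predF A) A).

From mathcomp Require Import all_boot.
From mathcomp Require Import zify.
Set Implicit Arguments. Unset Strict Implicit. Unset Printing Implicit Defensive.

(* Write SM for SM_{pred F}[F] and H = Hvars h for the hiding variables.  The
   proof rests on a substitution lemma: evaluating the renamed formula
   SM^h_H in I under a valuation nu is the same as evaluating SM itself in
   the interpretation J that reads the symbols of h from nu(H) and the other
   symbols from I.  This needs that SM never rebinds a variable of H, which
   holds because the hiding variables have odd indices while SM binds only the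
   even-indexed U's.  Since SM has no free object or predicate variables,
   the coincidence lemma makes its truth value independent of nu and env, so
   the existential over H in the hidden formula ranges exactly over the
   answer sets J that agree with I outside h. *)

Fixpoint fpv (A : form) : seq pvar :=
  match A with
  | FBot | FEq _ _ | FAtom (PC _) _ => [::]
  | FAtom (PV v) _ => [:: v]
  | FAnd A B | FOr A B | FImp A B => fpv A ++ fpv B
  | FAll _ A | FEx _ A => fpv A
  | FAll2 v A | FEx2 v A => filter (predC1 v) (fpv A)
  end.

Fixpoint even_binders (A : form) : bool :=
  match A with
  | FAnd A B | FOr A B | FImp A B => even_binders A && even_binders B
  | FAll _ A | FEx _ A => even_binders A
  | FAll2 v A | FEx2 v A => ~~ odd v.1 && even_binders A
  | _ => true
  end.

Lemma in_catl (T : eqType) (U : Type) (f g : T -> U) (s1 s2 : seq T) :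
  {in s1 ++ s2, f =1 g} -> {in s1, f =1 g}.
Proof. by move=> E x hx; apply: E; rewrite mem_cat hx. Qed.

Lemma in_catr (T : eqType) (U : Type) (f g : T -> U) (s1 s2 : seq T) :
  {in s1 ++ s2, f =1 g} -> {in s2, f =1 g}.
Proof. by move=> E x hx; apply: E; rewrite mem_cat hx orbT. Qed.

Fixpoint term_nested_ind (P : term -> Prop) (HV : forall x, P (TVar x))
    (HF : forall f ts, (forall u, List.In u ts -> P u) -> P (TFn f ts))
    (t : term) : P t :=
  match t with
  | TVar x => HV x
  | TFn f ts => HF f ts
      ((fix all_sub (us : seq term) : forall u, List.In u us -> P u :=
          match us with
          | [::] => fun u (abs : List.In u [::]) => False_ind (P u) abs
          | u' :: us' => fun u Hu =>
              match Hu with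
              | or_introl E => eq_ind u' P (term_nested_ind HV HF u') u E
              | or_intror Hu' => all_sub us' u Hu'
              end
          end) ts)
  end.

Lemma eval_ext (e1 e2 : nat -> term) (t : term) :
  {in term_vars t, e1 =1 e2} -> eval e1 t = eval e2 t.
Proof.
elim/term_nested_ind: t => [x | f ts IH] E /=; first by apply: E; rewrite mem_head.
congr TFn; elim: ts IH E => //= u us IHus IH E.
by rewrite (IH u (or_introl erefl) (in_catl E)) (IHus (fun v Hv => IH v (or_intror Hv)) (in_catr E)).
Qed.

Lemma map_eval_ext (e1 e2 : nat -> term) (ts : seq term) :
  {in flatten (map term_vars ts), e1 =1 e2} -> map (eval e1) ts = map (eval e2) ts.
Proof. by move=> E; case: (eval_ext (t := TFn (0, 0) ts) E). Qed.

Lemma upd_env_agree (e1 e2 : nat -> term) (x : nat) (t : term) (s : seq nat) :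
  {in filter (predC1 x) s, e1 =1 e2} -> {in s, upd_env e1 x t =1 upd_env e2 x t}.
Proof.
by move=> E y hy; rewrite /upd_env; case: eqP => // /eqP ne; apply: E; rewrite mem_filter /= ne.
Qed.

Lemma upd_pv_agree (nu1 nu2 : pval) (v : pvar) (R : seq term -> Prop) (s : seq pvar) :
  {in filter (predC1 v) s, nu1 =1 nu2} -> {in s, upd_pv nu1 v R =1 upd_pv nu2 v R}.
Proof.
by move=> E w hw; rewrite /upd_pv; case: eqP => // /eqP ne; apply: E; rewrite mem_filter /= ne.
Qed.

Lemma sat_ext (sig : seq funsym) (I : interp) (A : form) :
  forall (nu1 nu2 : pval) (env1 env2 : nat -> term),
  {in fpv A, nu1 =1 nu2} -> {in fv A, env1 =1 env2} ->
  sat sig I nu1 env1 A <-> sat sig I nu2 env2 A.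
Proof.
elim: A => [|[p|v] ts|t1 t2|A IHA B IHB|A IHA B IHB|A IHA B IHB|x A IHA|x A IHA|v A IHA|v A IHA]
  nu1 nu2 env1 env2 Hnu Henv /=.
- by [].
- by rewrite (map_eval_ext Henv).
- by rewrite (map_eval_ext Henv) (Hnu v) ?mem_head.
- by rewrite (eval_ext (in_catl Henv)) (eval_ext (in_catr Henv)).
- move: (IHA _ _ _ _ (in_catl Hnu) (in_catl Henv)) (IHB _ _ _ _ (in_catr Hnu) (in_catr Henv)); tauto.
- move: (IHA _ _ _ _ (in_catl Hnu) (in_catl Henv)) (IHB _ _ _ _ (in_catr Hnu) (in_catr Henv)); tauto.
- move: (IHA _ _ _ _ (in_catl Hnu) (in_catl Henv)) (IHB _ _ _ _ (in_catr Hnu) (in_catr Henv)); tauto.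
- have key t := IHA _ _ _ _ Hnu (upd_env_agree t Henv).
  by split=> H t /H /key.
- have key t := IHA _ _ _ _ Hnu (upd_env_agree t Henv).
  by split=> -[t [Ht /key H]]; exists t.
- have key R := IHA _ _ _ _ (upd_pv_agree R Hnu) Henv.
  by split=> H R /H /key.
- have key R := IHA _ _ _ _ (upd_pv_agree R Hnu) Henv.
  by split=> -[R [HR /key H]]; exists R.
Qed.

Lemma sat_Ex2s (sig : seq funsym) (I : interp) (vs : seq pvar) (B : form)
    (nu : pval) (env : nat -> term) :
  sat sig I nu env (Ex2s vs B) <->
  exists nu', (forall v, v \notin vs -> nu' v = nu v) /\
    (forall v, v \in vs -> rel_ok sig v.2 (nu' v)) /\ sat sig I nu' env B.
Proof.
elim: vs nu => [|v vs IH] nu /=.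
  split=> [H|[nu' [E [_ H]]]]; first by exists nu.
  have Enu : {in fpv B, nu' =1 nu} by move=> w _; rewrite E.
  exact: (@sat_ext sig I B nu' nu env env Enu (fun _ _ => erefl)).1 H.
split=> [[R [HR /IH [nu' [E [Hr H]]]]] | [nu' [E [Hr H]]]].
- exists nu'; split; last split=> //.
  + move=> w; rewrite inE negb_or => /andP [ne nw].
    by rewrite E // /upd_pv (negbTE ne).
  + move=> w; rewrite inE; case: (boolP (w \in vs)) => [/Hr //|nw].
    rewrite orbF => /eqP Ew; subst w; rewrite E // /upd_pv; by case: eqP.
- exists (nu' v); split; first by apply: Hr; rewrite mem_head.
  apply/IH; exists nu'; split; last split=> //.
  + move=> w nw; rewrite /upd_pv; case: eqP => [-> //|ne].
    by apply: E; rewrite inE negb_or nw andbT; apply/eqP.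
  + by move=> w hw; apply: Hr; rewrite inE hw orbT.
Qed.

Definition hv (h : seq predsym) (p : predsym) : pvar := nth (0, 0) (Hvars h) (index p h).

Lemma hv_eq (h : seq predsym) (p : predsym) :
  p \in h -> hv h p = (2 * index p h + 1, p.2).
Proof. by move=> Hp; rewrite /hv /Hvars nth_mkseq ?index_mem // nth_index. Qed.

Lemma hv_mem (h : seq predsym) (p : predsym) : p \in h -> hv h p \in Hvars h.
Proof. by move=> Hp; rewrite /hv; apply: mem_nth; rewrite size_mkseq index_mem. Qed.

Lemma hv_symbol (h : seq predsym) (p : predsym) :
  p \in h -> nth (0, 0) h (hv h p).1./2 = p.
Proof.
by move=> Hp; rewrite hv_eq //= (_ : (2 * index p h + 1)./2 = index p h) ?nth_index //; lia.
Qed.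

Lemma Hvars_arity (h : seq predsym) (v : pvar) :
  v \in Hvars h -> v.2 = (nth (0, 0) h v.1./2).2.
Proof.
by case/mapP=> i _ -> /=; rewrite (_ : (2 * i + 1)./2 = i) //; lia.
Qed.

(* Hiding variables are odd, hence never rebound by even binders. *)
Lemma hv_odd (h : seq predsym) (p : predsym) : p \in h -> odd (hv h p).1.
Proof. by move=> Hp; rewrite hv_eq //= oddD oddM. Qed.

Lemma sat_hide (sig : seq funsym) (I J : interp) (h : seq predsym) (A : form) :
  even_binders A -> forall (nu : pval) (env : nat -> term),
  (forall p ts, p \in h -> J p ts <-> nu (hv h p) ts) ->
  (forall p ts, p \notin h -> J p ts <-> I p ts) ->
  sat sig I nu env (map_atoms (ren h (Hvars h)) A) <-> sat sig J nu env A.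
Proof.
elim: A => [|[p|v] ts|t1 t2|A IHA B IHB|A IHA B IHB|A IHA B IHB|x A IHA|x A IHA|v A IHA|v A IHA]
  //= Hev nu env Hh Hn.
- rewrite /ren; case: ifP => Hp /=; symmetry; first exact: Hh.
  by apply: Hn; rewrite Hp.
- case/andP: Hev => HA HB; move: (IHA HA nu env Hh Hn) (IHB HB nu env Hh Hn); tauto.
- case/andP: Hev => HA HB; move: (IHA HA nu env Hh Hn) (IHB HB nu env Hh Hn); tauto.
- case/andP: Hev => HA HB; move: (IHA HA nu env Hh Hn) (IHB HB nu env Hh Hn); tauto.
- have key t := IHA Hev nu (upd_env env x t) Hh Hn.
  by split=> H t /H /key.
- have key t := IHA Hev nu (upd_env env x t) Hh Hn.
  by split=> -[t [Ht /key H]]; exists t.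
- case/andP: Hev => Hv HA.
  have key R : sat sig I (upd_pv nu v R) env (map_atoms (ren h (Hvars h)) A)
                <-> sat sig J (upd_pv nu v R) env A.
    apply: IHA => // p ts Hp; rewrite /upd_pv; case: eqP => [E|_]; last exact: Hh.
    by move: Hv; rewrite -E hv_odd.
  by split=> H R /H /key.
- case/andP: Hev => Hv HA.
  have key R : sat sig I (upd_pv nu v R) env (map_atoms (ren h (Hvars h)) A)
                <-> sat sig J (upd_pv nu v R) env A.
    apply: IHA => // p ts Hp; rewrite /upd_pv; case: eqP => [E|_]; last exact: Hh.
    by move: Hv; rewrite -E hv_odd.
  by split=> -[R [HR /key H]]; exists R.
Qed.

Definition unhide (I : interp) (h : seq predsym) (nu : pval) : interp :=
  fun p ts => if p \in h then nu (hv h p) ts else I p ts.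

Definition hide_val (J : interp) (h : seq predsym) (nu : pval) : pval :=
  fun w => if w \in Hvars h then J (nth (0, 0) h w.1./2) else nu w.

Lemma sat_unhide (sig : seq funsym) (I : interp) (h : seq predsym) (A : form)
    (nu : pval) (env : nat -> term) : even_binders A ->
  sat sig I nu env (map_atoms (ren h (Hvars h)) A) <-> sat sig (unhide I h nu) nu env A.
Proof.
by move=> Hev; apply: sat_hide => // p ts Hp; rewrite /unhide ?Hp ?(negbTE Hp).
Qed.

Lemma sat_hide_val (sig : seq funsym) (I J : interp) (h : seq predsym) (A : form)
    (nu : pval) (env : nat -> term) : even_binders A ->
  (forall p ts, p \notin h -> J p ts <-> I p ts) ->
  sat sig I (hide_val J h nu) env (map_atoms (ren h (Hvars h)) A) <-> sat sig J (hide_val J h nu) env A.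
Proof.
move=> Hev HJI; apply: sat_hide => // p ts Hp.
by rewrite /hide_val hv_mem // hv_symbol.
Qed.

Lemma fo_fpv (A : form) : first_order A -> fpv A = [::].
Proof.
elim: A => //= [[p|v] ts //|A IHA B IHB|A IHA B IHB|A IHA B IHB] /andP [HA HB];
  by rewrite IHA ?IHB.
Qed.

Lemma fo_even_binders (A : form) : first_order A -> even_binders A.
Proof.
elim: A => //= [A IHA B IHB|A IHA B IHB|A IHA B IHB] /andP [HA HB];
  by rewrite IHA ?IHB.
Qed.

Lemma even_binders_star (ps : seq predsym) (Us : seq pvar) (A : form) :
  even_binders (star ps Us A) = even_binders A.
Proof.
elim: A => [|P ts|t1 t2|A IHA B IHB|A IHA B IHB|A IHA B IHB|y A IHA|y A IHA|v A IHA|v A IHA] //=;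
  by rewrite ?IHA ?IHB ?andbb.
Qed.

Lemma even_binders_foldrAll (B : form) (xs : seq nat) :
  even_binders (foldr FAll B xs) = even_binders B.
Proof. by elim: xs. Qed.

Lemma even_binders_le_tuple (Ps Qs : seq pref) : even_binders (le_tuple Ps Qs).
Proof.
rewrite /le_tuple; elim: Ps Qs => [|P Ps IH] [|Q Qs] //=.
by rewrite IH /le_form even_binders_foldrAll.
Qed.

Lemma even_binders_Ex2s (vs : seq pvar) (B : form) :
  even_binders (Ex2s vs B) = all (fun v : pvar => ~~ odd v.1) vs && even_binders B.
Proof. by elim: vs => //= v vs ->; rewrite andbA. Qed.

Lemma even_binders_SM (ps : seq predsym) (F : form) :
  first_order F -> even_binders (SM ps F).
Proof.
move=> Hfo; rewrite /SM /= even_binders_Ex2s /= !even_binders_le_tuple.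
rewrite even_binders_star fo_even_binders // !andbT.
by apply/allP => v /mapP [i _ ->] /=; rewrite oddM.
Qed.

Lemma fv_star (ps : seq predsym) (Us : seq pvar) (A : form) (x : nat) :
  x \in fv (star ps Us A) -> x \in fv A.
Proof.
elim: A x => [|P ts|t1 t2|A IHA B IHB|A IHA B IHB|A IHA B IHB|y A IHA|y A IHA|v A IHA|v A IHA] x //=.
- by rewrite !mem_cat => /orP [/IHA|/IHB] ->; rewrite ?orbT.
- by rewrite !mem_cat => /orP [/IHA|/IHB] ->; rewrite ?orbT.
- by rewrite !mem_cat => /orP [/orP [/IHA|/IHB]|] ->; rewrite ?orbT.
- by rewrite !mem_filter => /andP [-> /IHA].
- by rewrite !mem_filter => /andP [-> /IHA].
- exact: IHA.
- exact: IHA.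
Qed.

Lemma fv_foldrAll (B : form) (xs : seq nat) (x : nat) :
  x \in fv (foldr FAll B xs) -> x \in fv B /\ x \notin xs.
Proof.
elim: xs => [|y ys IH] //=; rewrite mem_filter => /andP [/= ne /IH [H1 H2]].
by split=> //; rewrite inE negb_or ne.
Qed.

Lemma fv_le_tuple (Ps Qs : seq pref) (x : nat) : x \notin fv (le_tuple Ps Qs).
Proof.
have vars_TVar (s : seq nat) : flatten (map term_vars (map TVar s)) = s.
  by elim: s => //= y s ->.
rewrite /le_tuple; elim: Ps Qs => [|P Ps IH] [|Q Qs] //=.
rewrite mem_cat negb_or IH andbT; apply/negP => /fv_foldrAll [] /=.
by rewrite mem_cat !vars_TVar orbb => ->.
Qed.

Lemma fv_Ex2s (vs : seq pvar) (B : form) : fv (Ex2s vs B) = fv B.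
Proof. by elim: vs. Qed.

Lemma fv_SM (ps : seq predsym) (F : form) (x : nat) :
  fv F = [::] -> x \notin fv (SM ps F).
Proof.
move=> HF; rewrite /SM /= HF fv_Ex2s /= !mem_cat !(negbTE (fv_le_tuple _ _ _)) /= orbF.
by apply/negP => /fv_star; rewrite HF.
Qed.

Definition refs_within (Us : seq pvar) (P : pref) : bool :=
  if P is PV v then v \in Us else true.

Lemma fpv_star (ps : seq predsym) (Us : seq pvar) (A : form) (v : pvar) :
  size Us = size ps -> first_order A -> v \in fpv (star ps Us A) -> v \in Us.
Proof.
move=> HU; elim: A => [|[p|w] ts|t1 t2|A IHA B IHB|A IHA B IHB|A IHA B IHB|y A IHA|y A IHA|w A IHA|w A IHA] //=.
- rewrite /ren; case: ifP => Hp //= _; rewrite inE => /eqP ->.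
  by apply: mem_nth; rewrite HU index_mem.
- by move=> /andP [HA HB]; rewrite mem_cat => /orP [/(IHA HA)|/(IHB HB)].
- by move=> /andP [HA HB]; rewrite mem_cat => /orP [/(IHA HA)|/(IHB HB)].
- move=> /andP [HA HB]; rewrite !mem_cat (fo_fpv HA) (fo_fpv HB) /= ?orbF.
  by move=> /orP [/(IHA HA)|/(IHB HB)].
Qed.

Lemma fpv_foldrAll (B : form) (xs : seq nat) : fpv (foldr FAll B xs) = fpv B.
Proof. by elim: xs. Qed.

Lemma fpv_le_tuple (Us : seq pvar) (Ps Qs : seq pref) (v : pvar) :
  all (refs_within Us) Ps -> all (refs_within Us) Qs ->
  v \in fpv (le_tuple Ps Qs) -> v \in Us.
Proof.
rewrite /le_tuple; elim: Ps Qs => [|P Ps IH] [|Q Qs] //=.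
move=> /andP [HP HPs] /andP [HQ HQs]; rewrite mem_cat => /orP [|/IH]; last exact.
rewrite /le_form fpv_foldrAll /=.
by case: P HP => [p|u] /= HP; case: Q HQ => [q|w] /= HQ; rewrite ?mem_cat ?inE //;
  [move=> /eqP -> | move=> /eqP -> | move=> /orP [] /eqP ->].
Qed.

Lemma fpv_Ex2s (vs : seq pvar) (B : form) (v : pvar) :
  v \in fpv (Ex2s vs B) -> v \in fpv B /\ v \notin vs.
Proof.
elim: vs => [|y ys IH] //=; rewrite mem_filter => /andP [/= ne /IH [H1 H2]].
by split=> //; rewrite inE negb_or ne.
Qed.

Lemma fpv_SM (ps : seq predsym) (F : form) (v : pvar) :
  first_order F -> v \notin fpv (SM ps F).
Proof.
move=> Hfo; rewrite /SM /= fo_fpv //= cats0; apply/negP => /fpv_Ex2s [Hv /negP]; apply; move: Hv.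
have okU : all (refs_within (Uvars ps)) (map PV (Uvars ps)) by rewrite all_map; apply/allP.
have okP : all (refs_within (Uvars ps)) (map PC ps) by rewrite all_map; apply/allP.
rewrite /lt_tuple /= !mem_cat ?cats0 ?orbF => /orP [/orP [|]|].
- exact: fpv_le_tuple.
- exact: fpv_le_tuple.
- by apply: fpv_star; rewrite // size_mkseq.
Qed.

Lemma sat_SM_closed (sig : seq funsym) (J : interp) (F : form) {nu1 nu2 : pval}
    {env1 env2 : nat -> term} :
  first_order F -> fv F = [::] ->
  sat sig J nu1 env1 (SM (predF F) F) -> sat sig J nu2 env2 (SM (predF F) F).
Proof.
move=> Hfo Hfv; apply: (@sat_ext sig J _ nu1 nu2 env1 env2 _ _).1 => [v|x] H.
- by move: (fpv_SM (predF F) v Hfo); rewrite H.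
- by move: (fv_SM (predF F) x Hfv); rewrite H.
Qed.
(* From a model of the hidden formula, the witnesses for H complete I to an
   answer set of F. *)
Lemma answer_set_of_hidden (sig : seq funsym) (F : form) (h : seq predsym) (I : interp) :
  first_order F -> fv F = [::] -> {subset h <= predF F} ->
  herbrand_over sig [seq p <- predF F | p \notin h] I ->
  models sig I (hidden_SM F h) ->
  exists J, answer_set sig F J /\
    (forall p ts, I p ts <-> (p \in [seq p <- predF F | p \notin h] /\ J p ts)).
Proof.
move=> Hfo Hfv Hsub HI /(_ (fun _ _ => False) (fun _ => TVar 0)).
case/sat_Ex2s=> nu [_ [Hrel /sat_unhide Hsat]].
exists (unhide I h nu); split; [split|].
- move=> p ts; rewrite /unhide; case: ifP => Hp.
  + by move/(Hrel _ (hv_mem Hp)); rewrite hv_eq //= => -[]; split=> //; apply: Hsub.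
  + by case/HI; rewrite mem_filter => /andP [].
- by move=> nu' env'; exact: (sat_SM_closed Hfo Hfv (Hsat (even_binders_SM _ Hfo))).
- move=> p ts; rewrite /unhide mem_filter; case: ifP => Hp /=.
  + by split=> [/HI []|[]] //; rewrite mem_filter Hp.
  + split=> [H|[_ H]] //; split=> //.
    by case: (HI _ _ H); rewrite mem_filter => /andP [].
Qed.

(* Conversely, storing the hidden part of an answer set in H witnesses the
   hidden formula for its restriction. *)
Lemma hidden_of_answer_set (sig : seq funsym) (F : form) (h : seq predsym) (I J : interp) :
  first_order F -> answer_set sig F J ->
  (forall p ts, I p ts <-> (p \in [seq p <- predF F | p \notin h] /\ J p ts)) ->
  models sig I (hidden_SM F h).
Proof.
move=> Hfo [HJ HJm] HIJ nu env; apply/sat_Ex2s; exists (hide_val J h nu); split; [|split].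
- by move=> v /negbTE Hv; rewrite /hide_val Hv.
- by move=> v Hv ts; rewrite /hide_val Hv (Hvars_arity Hv) => /HJ [_ []].
- apply/sat_hide_val; [exact: even_binders_SM| |exact: HJm].
  move=> p ts Hp; rewrite HIJ mem_filter Hp /=.
  by split=> [H|[]//]; split=> //; case: (HJ _ _ H).
Qed.

Theorem proposition1 (sig : seq funsym) (F : form) (h : seq predsym) (I : interp) :
  first_order F -> fv F = [::] -> wf sig F ->
  uniq h -> {subset h <= predF F} ->
  herbrand_over sig [seq p <- predF F | p \notin h] I ->
  (models sig I (hidden_SM F h) <->
   exists J, answer_set sig F J /\
     (forall p ts, I p ts <-> (p \in [seq p <- predF F | p \notin h] /\ J p ts))).
Proof.
move=> Hfo Hfv _ _ Hsub HI; split; first exact: answer_set_of_hidden.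
by case=> J [HJ HIJ]; apply: hidden_of_answer_set HJ HIJ.
Qed.
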